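(* Let $X$ be a discrete metric space. There exists an approximate unit for the ideal $C_0(X\times X;\Delta)\subseteq \ell^\infty(X\times X)$ consisting of positive definite functions if and only if there exists a metrically proper function of negative type on $X\times X$.
   Context: Let $(X,d)$ be a metric space with the discrete topology. A function $f:X\times X\to\mathbb{C}$ is positive definite if for every $n\ge1$, all $x_1,\dots,x_n\in X$ and all $z_1,\dots,z_n\in\mathbb{C}$ one has $\sum_{i,j}\overline{z_i}\,f(x_i,x_j)\,z_j\ge 0$. A function $h:X\times X\to\mathbb{R}$ is of negative type if (a) $h(x,x)=0$ for all $x$; (b) $h(x,y)=h(y,x)$ for all $x,y$; (c) $\sum_{i,j}a_i h(x_i,x_j)a_j\le 0$ for all $n$, all $x_1,\dots,x_n\in X$ and all $a_1,\dots,a_n\in\mathbb{R}$ with $\sum_j a_j=0$. A function $f:X\times X\to\mathbb{C}$ is metrically proper if (a) for every $R>0$, $\sup\{|f(x,y)|: d(x,y)\le R\}<\infty$, and (b) for every $C>0$ there is $R>0$ such that $|f(x,y)|>C$ whenever $d(x,y)>R$. Let $\Delta$ be the diagonal of $X\times X$ and $C_0(X\times X;\Delta)$ the set of bounded functions $f$ on $X\times X$ such that for every $\epsilon>0$ there is $R>0$ with $|f(x,y)|<\epsilon$ whenever $d(x,y)>R$; it is an ideal in the $C^*$-algebra $\ell^\infty(X\times X)$ (sup norm). An approximate unit for $C_0(X\times X;\Delta)$ is a net $(u_\lambda)$ of elements of $C_0(X\times X;\Delta)$ such that $\|u_\lambda f-f\|_\infty\to0$ for every $f\in C_0(X\times X;\Delta)$;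 equivalently (for bounded nets), $u_\lambda\to1$ uniformly on each set $B_\Delta(R)=\{(x,y):d(x,y)<R\}$. *)

From HB Require Import structures.
From mathcomp Require Import all_boot all_order all_algebra.
From mathcomp Require Import complex.
From mathcomp Require Import reals.
Set Implicit Arguments. Unset Strict Implicit. Unset Printing Implicit Defensive.
Import Order.TTheory GRing.Theory Num.Theory.
Local Open Scope ring_scope.
Local Open Scope complex_scope.

Section Defs.
Variable R : realType.
Local Notation C := R[i].

Definition is_metric (X : Type) (d : X -> X -> R) : Prop :=
  (forall x y, 0 <= d x y) /\
  (forall x y, d x y = 0 <-> x = y) /\
  (forall x y, d x y = d y x) /\
  (forall x y z, d x z <= d x y + d y z).

Definition positive_definite (X : Type) (f : X -> X -> C) : Prop :=
  forall (n : nat) (x : 'I_n -> X) (z : 'I_n -> C),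
    0 <= \sum_(i < n) \sum_(j < n) (z i)^* * f (x i) (x j) * z j.

Definition negative_type (X : Type) (h : X -> X -> R) : Prop :=
  (forall x, h x x = 0) /\
  (forall x y, h x y = h y x) /\
  (forall (n : nat) (x : 'I_n -> X) (a : 'I_n -> R),
     \sum_(j < n) a j = 0 ->
     \sum_(i < n) \sum_(j < n) a i * h (x i) (x j) * a j <= 0).

Definition metrically_proper (X : Type) (d : X -> X -> R) (f : X -> X -> C) : Prop :=
  (forall r : R, 0 < r -> exists M : R,
      forall x y, d x y <= r -> `|f x y| <= M%:C) /\
  (forall c : R, 0 < c -> exists r : R, 0 < r /\
      forall x y, r < d x y -> c%:C < `|f x y|).

Definition C0_diag (X : Type) (d : X -> X -> R) (f : X -> X -> C) : Prop :=
  (exists M : R, forall x y, `|f x y| <= M%:C) /\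
  (forall eps : R, 0 < eps -> exists r : R, 0 < r /\
      forall x y, r < d x y -> `|f x y| < eps%:C).

Definition directed (I : Type) (le : I -> I -> Prop) : Prop :=
  inhabited I /\
  (forall i, le i i) /\
  (forall i j k, le i j -> le j k -> le i k) /\
  (forall i j, exists k, le i k /\ le j k).

Definition has_pd_approx_unit (X : Type) (d : X -> X -> R) : Prop :=
  exists (I : Type) (le : I -> I -> Prop) (u : I -> X -> X -> C),
    directed le /\
    (forall i, C0_diag d (u i) /\ positive_definite (u i)) /\
    (forall f, C0_diag d f ->
       forall eps : R, 0 < eps -> exists i0, forall i, le i0 i ->
         forall x y, `|u i x y * f x y - f x y| <= eps%:C).
End Defs.

From HB Require Import structures.
From mathcomp Require Import all_boot all_order all_algebra.
From mathcomp Require Import reals ring lra.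
From mathcomp Require Import boolp classical_sets topology normedtype sequences exp.
From mathcomp Require Import complex.
Import Order.TTheory GRing.Theory Num.Theory numFieldNormedType.Exports.
Import complex.
Set Implicit Arguments. Unset Strict Implicit. Unset Printing Implicit Defensive.
Local Open Scope ring_scope.
Local Open Scope classical_set_scope.

(* If [h] is of negative type and metrically proper, Schoenberg's theorem makes
   the kernels [exp(-h / (n + 1))] positive definite; they vanish at infinity
   because [h] is proper and tend to [1] uniformly on each tube [d <= r]
   because [h] is bounded there.
   Conversely, pick [v n] in the approximate unit with [|v n - 1| <= 2^-(n+2)]
   on the tube [d <= n + 1]. The squared GNS distance
   [g n x y = ||xi_x - xi_y||^2] of [v n] is of negative type, at most [2^-n]
   on that tube, and at least [1] wherever [|v n| < 1/4], hence far from the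
   diagonal. So [h = sum_n g n] converges, is of negative type, is bounded on
   tubes and tends to infinity with [d]. *)

Definition ord_cons (T : Type) n (x0 : T) (y : 'I_n -> T) : 'I_n.+1 -> T :=
  fun i => if unlift ord0 i is Some j then y j else x0.

Lemma ord_cons0 T n (x0 : T) y : @ord_cons T n x0 y ord0 = x0.
Proof. by rewrite /ord_cons unlift_none. Qed.

Lemma ord_consS T n (x0 : T) y j : @ord_cons T n x0 y (lift ord0 j) = y j.
Proof. by rewrite /ord_cons liftK. Qed.

Lemma ord_cons_eta T n (f : 'I_n.+1 -> T) i :
  ord_cons (f ord0) (fun j => f (lift ord0 j)) i = f i.
Proof. by rewrite /ord_cons; case: unliftP => [j ->|->]. Qed.

Section RealKernels.
Variables (R : realFieldType) (X : Type).
Implicit Types (K L : X -> X -> R) (f : X -> R).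

Definition qform K n (x : 'I_n -> X) (a : 'I_n -> R) :=
  \sum_(i < n) \sum_(j < n) a i * K (x i) (x j) * a j.

Definition psd_kernel K := forall n x a, 0 <= @qform K n x a.

Definition symmetric_kernel K := forall p q, K p q = K q p.

Lemma eq_qform K L n (x : 'I_n -> X) a :
  (forall p q, K p q = L p q) -> qform K x a = qform L x a.
Proof. by move=> E; apply: eq_bigr => i _; apply: eq_bigr => j _; rewrite E. Qed.

Lemma qform0 K (x : 'I_0 -> X) a : qform K x a = 0.
Proof. by rewrite /qform big_ord0. Qed.

Lemma qform1 K (x : 'I_1 -> X) a :
  qform K x a = a ord0 * K (x ord0) (x ord0) * a ord0.
Proof. by rewrite /qform !big_ord1. Qed.

Lemma qform_cons K n x0 y c b : qform K (@ord_cons X n x0 y) (ord_cons c b) =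
  c * K x0 x0 * c + \sum_(j < n) c * K x0 (y j) * b j
  + \sum_(i < n) b i * K (y i) x0 * c + qform K y b.
Proof.
rewrite /qform big_ord_recl big_ord_recl !ord_cons0.
under eq_bigr do rewrite !ord_consS.
under [X in _ + X]eq_bigr do rewrite big_ord_recl !ord_consS !ord_cons0.
under [X in _ + X]eq_bigr do under eq_bigr do rewrite !ord_consS.
by rewrite big_split /= !addrA.
Qed.

Lemma qform_eta K n (x : 'I_n.+1 -> X) a :
  qform K x a = qform K (ord_cons (x ord0) (fun j => x (lift ord0 j)))
                        (ord_cons (a ord0) (fun j => a (lift ord0 j))).
Proof. by apply: eq_bigr => i _; apply: eq_bigr => j _; rewrite !ord_cons_eta. Qed.

Lemma qform2 K p q c c' :
  qform K (ord_cons p (fun _ : 'I_1 => q)) (ord_cons c (fun _ => c')) =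
  c * K p p * c + c * K p q * c' + c' * K q p * c + c' * K q q * c'.
Proof. by rewrite qform_cons qform1 !big_ord1. Qed.

Lemma qform_cons_vanish K n x0 y c b :
  (forall q, K x0 q = 0) -> (forall q, K q x0 = 0) ->
  qform K (@ord_cons X n x0 y) (ord_cons c b) = qform K y b.
Proof.
move=> K0l K0r; rewrite qform_cons K0l mulr0 mul0r add0r.
rewrite big1 ?add0r; last by move=> j _; rewrite K0l mulr0 mul0r.
by rewrite big1 ?add0r // => i _; rewrite K0r mulr0 mul0r.
Qed.

Lemma qformD K L n (x : 'I_n -> X) a :
  qform (fun p q => K p q + L p q) x a = qform K x a + qform L x a.
Proof.
rewrite /qform -big_split; apply: eq_bigr => i _; rewrite -big_split.
by apply: eq_bigr => j _ /=; ring.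
Qed.

Lemma qformZ c K n (x : 'I_n -> X) a :
  qform (fun p q => c * K p q) x a = c * qform K x a.
Proof.
rewrite /qform mulr_sumr; apply: eq_bigr => i _; rewrite mulr_sumr.
by apply: eq_bigr => j _ /=; ring.
Qed.

Lemma qform_swap K n (x : 'I_n -> X) a :
  qform (fun p q => K q p) x a = qform K x a.
Proof. by rewrite /qform exchange_big; apply: eq_bigr => i _; apply: eq_bigr => j _ /=; ring. Qed.

Lemma qform_diag_scale K f n (x : 'I_n -> X) a :
  qform (fun p q => f p * f q * K p q) x a = qform K x (fun i => a i * f (x i)).
Proof. by apply: eq_bigr => i _; apply: eq_bigr => j _ /=; ring. Qed.

Lemma qform_rank1 f n (x : 'I_n -> X) a :
  qform (fun p q => f p * f q) x a = (\sum_(i < n) a i * f (x i)) ^+ 2.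
Proof.
rewrite expr2 big_distrl; apply: eq_bigr => i _; rewrite big_distrr.
by apply: eq_bigr => j _ /=; ring.
Qed.

Lemma qform_row f n (x : 'I_n -> X) a :
  qform (fun p q => f p) x a = (\sum_(i < n) a i * f (x i)) * \sum_(j < n) a j.
Proof.
rewrite big_distrl; apply: eq_bigr => i _; rewrite big_distrr.
by apply: eq_bigr => j _ /=; ring.
Qed.

Lemma qform_col f n (x : 'I_n -> X) a :
  qform (fun p q => f q) x a = (\sum_(i < n) a i * f (x i)) * \sum_(j < n) a j.
Proof. by rewrite -qform_swap qform_row. Qed.

Lemma psd_diag_ge0 K p : psd_kernel K -> 0 <= K p p.
Proof. by move=> /(_ 1%N (fun _ => p) (fun _ => 1)); rewrite qform1 mul1r mulr1. Qed.

(* The degenerate case of Cauchy-Schwarz. *)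
Lemma psd_diag0_row K p q :
  psd_kernel K -> symmetric_kernel K -> K p p = 0 -> K p q = 0.
Proof.
move=> psdK symK Kp0.
have ge0 t : 0 <= t * (2 * K p q) + K q q.
  have := psdK _ (ord_cons p (fun _ : 'I_1 => q)) (ord_cons t (fun _ => 1)).
  by rewrite qform2 Kp0 (symK q p); lra.
apply/eqP; apply: contraT => Kpq0.
have Kpq20 : 2 * K p q != 0 by rewrite mulf_neq0 // pnatr_eq0.
by have := ge0 (- (K q q + 1) / (2 * K p q)); rewrite divfK //; lra.
Qed.

Lemma psd_const1 : psd_kernel (fun _ _ => 1).
Proof.
move=> n x a; rewrite (@eq_qform _ (fun p q => (fun _ => 1) p * (fun _ => 1) q)).
  by rewrite qform_rank1 sqr_ge0.
by move=> p q; rewrite mulr1.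
Qed.

Lemma psdD K L : psd_kernel K -> psd_kernel L -> psd_kernel (fun p q => K p q + L p q).
Proof. by move=> psdK psdL n x a; rewrite qformD addr_ge0. Qed.

Lemma psdZ c K : 0 <= c -> psd_kernel K -> psd_kernel (fun p q => c * K p q).
Proof. by move=> c0 psdK n x a; rewrite qformZ mulr_ge0. Qed.

Lemma psd_diag_scale f K : psd_kernel K -> psd_kernel (fun p q => f p * f q * K p q).
Proof. by move=> psdK n x a; rewrite qform_diag_scale. Qed.

Section SchurComplement.
Variables (L : X -> X -> R) (x0 : X).
Hypotheses (psdL : psd_kernel L) (symL : symmetric_kernel L).

Definition schur_complement p q := L p q - L p x0 * L x0 q / L x0 x0.

Lemma schur_complement_sym : symmetric_kernel schur_complement.
Proof. by move=> p q; rewrite /schur_complement symL (symL p x0) (symL x0 q); ring. Qed.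

Lemma schur_complement0 q : schur_complement x0 q = 0.
Proof.
rewrite /schur_complement; have [L00|L0n] := eqVneq (L x0 x0) 0.
  by rewrite (psd_diag0_row q psdL symL L00); ring.
by rewrite mulrAC divff // mul1r subrr.
Qed.

Lemma schur_complement_psd : psd_kernel schur_complement.
Proof.
move=> m y b; have [L00|L0n] := eqVneq (L x0 x0) 0.
  by rewrite (@eq_qform _ L) ?psdL // => p q; rewrite /schur_complement L00 invr0; ring.
set S := \sum_(j < m) b j * L x0 (y j).
have Ecol : \sum_(j < m) - S / L x0 x0 * L x0 (y j) * b j = - S / L x0 x0 * S.
  by rewrite /S mulr_sumr; apply: eq_bigr => j _; ring.
have Erow : \sum_(i < m) b i * L (y i) x0 * (- S / L x0 x0) = - S / L x0 x0 * S.
  by rewrite /S mulr_sumr; apply: eq_bigr => j _; rewrite symL; ring.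
have Esplit : qform L y b = qform schur_complement y b + (L x0 x0)^-1 * S ^+ 2.
  rewrite -(qform_rank1 (L x0)) -qformZ -qformD.
  by apply: eq_qform => p q; rewrite /schur_complement (symL p x0); ring.
(* Test [L] against the vector [(-S / L x0 x0, b)] on the points [(x0, y)] *)
have := psdL (ord_cons x0 y) (ord_cons (- S / L x0 x0) b).
rewrite qform_cons Ecol Erow Esplit => /le_trans; apply.
by rewrite le_eqVlt; apply/predU1l; field.
Qed.

End SchurComplement.

(* Schur product theorem, by induction on the number of points: the rank one
   part [L p x0 * L q x0 / L x0 x0] of [L] contributes a diagonal rescaling of
   [K], and the Schur complement vanishes at [x0], which can then be dropped. *)
Lemma psd_mul K L : psd_kernel K -> psd_kernel L -> symmetric_kernel L ->
  psd_kernel (fun p q => K p q * L p q).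
Proof.
move=> + + + n; elim: n K L => [|n IH] K L psdK psdL symL x a; first by rewrite qform0.
set x0 := x ord0; set L' := schur_complement L x0.
have L'0 q : L' q x0 = 0 by rewrite /L' schur_complement_sym // schur_complement0.
have dec p q : K p q * L p q =
    K p q * L' p q + (L x0 x0)^-1 * (L p x0 * L q x0 * K p q).
  by rewrite /L' /schur_complement (symL x0 q); ring.
rewrite (eq_qform _ _ dec) qformD qformZ; apply: addr_ge0; last first.
  by apply: mulr_ge0; [rewrite invr_ge0; exact: psd_diag_ge0 | exact: psd_diag_scale].
rewrite qform_eta -/x0 qform_cons_vanish; last 2 first.
- by move=> q; rewrite /L' schur_complement0 // mulr0.
- by move=> q; rewrite L'0 mulr0.
apply: IH => //; [exact: schur_complement_psd | exact: schur_complement_sym].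
Qed.

Lemma psd_exprn K m : psd_kernel K -> symmetric_kernel K ->
  psd_kernel (fun p q => K p q ^+ m).
Proof.
move=> psdK symK; elim: m => [|m IH] n x a.
  by rewrite (@eq_qform _ (fun _ _ => 1)) ?psd_const1 // => p q; rewrite expr0.
rewrite (@eq_qform _ (fun p q => K p q ^+ m * K p q)); first exact: psd_mul.
by move=> p q; rewrite exprSr.
Qed.

End RealKernels.

Section Schoenberg.
Variables (R : realType) (X : Type).
Implicit Types (K h : X -> X -> R).

Lemma qform_cvg K (S : nat -> X -> X -> R) n (x : 'I_n -> X) a :
  (forall p q, (fun N => S N p q) @ \oo --> K p q) ->
  (fun N => qform (S N) x a) @ \oo --> qform K x a.
Proof.
move=> SK; apply: (@cvg_big R _ +%R 0 xpredT (@add_continuous _)) => i _.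
apply: (@cvg_big R _ +%R 0 xpredT (@add_continuous _)) => j _.
by apply: cvgMr_tmp; apply: cvgMl_tmp; apply: SK.
Qed.

Lemma psd_cvg K (S : nat -> X -> X -> R) :
  (forall p q, (fun N => S N p q) @ \oo --> K p q) ->
  (forall N, psd_kernel (S N)) -> psd_kernel K.
Proof.
move=> SK psdS n x a; have /cvgr_to_ge := qform_cvg (x:=x) (a:=a) SK; apply.
by apply: nearW => N; apply: psdS.
Qed.

Lemma negative_type_cvg h (S : nat -> X -> X -> R) :
  (forall p q, (fun N => S N p q) @ \oo --> h p q) ->
  (forall N, negative_type (S N)) -> negative_type h.
Proof.
move=> Sh ntS; split; [|split].
- move=> p; rewrite -(cvg_lim (@Rhausdorff R) (Sh p p)).
  by rewrite (_ : (fun N => _) = fun=> 0) ?lim_cst //; apply/funext => N; case: (ntS N).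
- move=> p q; rewrite -(cvg_lim (@Rhausdorff R) (Sh p q)).
  rewrite (_ : (fun N => S N p q) = (fun N => S N q p)); first exact: cvg_lim (Sh q p).
  by apply/funext => N; case: (ntS N) => _ [].
- move=> n x a a0; have /cvgr_to_le := qform_cvg (x:=x) (a:=a) Sh; apply.
  by apply: nearW => N; case: (ntS N) => _ [_]; apply.
Qed.

Lemma negative_typeD h1 h2 : negative_type h1 -> negative_type h2 ->
  negative_type (fun p q => h1 p q + h2 p q).
Proof.
move=> [h10 [symh1 nth1]] [h20 [symh2 nth2]]; split; [|split].
- by move=> p; rewrite h10 h20 addr0.
- by move=> p q; rewrite symh1 symh2.
- move=> n x a a0; change (qform (fun p q => h1 p q + h2 p q) x a <= 0).
  by rewrite qformD -[0](addr0 0) lerD ?nth1 ?nth2.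
Qed.

Lemma negative_type_sum (g : nat -> X -> X -> R) N :
  (forall n, negative_type (g n)) ->
  negative_type (fun p q => \sum_(n < N) g n p q).
Proof.
move=> ntg; elim: N => [|N IH].
  split; [|split] => [p|p q|n x a _]; rewrite ?big_ord0 //.
  by rewrite big1 // => i _; rewrite big1 // => j _; rewrite big_ord0 mulr0 mul0r.
rewrite (_ : (fun p q => _) = (fun p q => \sum_(n < N) g n p q + g N p q)).
  exact: negative_typeD.
by apply/funext => p; apply/funext => q; rewrite big_ord_recr.
Qed.

Lemma psd_expR K : psd_kernel K -> symmetric_kernel K ->
  psd_kernel (fun p q => expR (K p q)).
Proof.
move=> psdK symK.
apply: psd_cvg (fun N p q => series (exp_coeff (K p q)) N) _ _.
  by move=> p q; apply: is_cvg_series_exp_coeff.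
elim=> [|N IH].
  move=> n x a; rewrite (@eq_qform _ _ _ (fun _ _ => 0 * 1)) ?qformZ ?mul0r //.
  by move=> p q; rewrite /series /= big_geq // mul0r.
rewrite (_ : (fun p q => _) =
  (fun p q => series (exp_coeff (K p q)) N + (N`!%:R)^-1 * K p q ^+ N)).
  by apply: psdD => //; apply: psdZ; [rewrite invr_ge0 ler0n | exact: psd_exprn].
by apply/funext => p; apply/funext => q; rewrite /series /= big_nat_recr //= mulrC.
Qed.

Lemma negative_type_ge0 h : negative_type h -> forall p q, 0 <= h p q.
Proof.
move=> [h0 [symh nth]] p q.
have := nth 2%N (ord_cons p (fun _ : 'I_1 => q)) (ord_cons 1 (fun _ => -1)).
rewrite big_ord_recl ord_cons0 big_ord1 ord_consS addrN => /(_ erefl).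
by rewrite -/(qform _ _ _) qform2 !h0 (symh q p); lra.
Qed.

(* Apply the negative type inequality to the points [x0, x] with weights
   [- \sum_j a j, a]. *)
Lemma psd_negative_type_centered h x0 : negative_type h ->
  psd_kernel (fun p q => h p x0 + h q x0 - h p q).
Proof.
move=> [h0 [symh nth]] n x a.
set s := \sum_(j < n) a j; set A := \sum_(i < n) a i * h (x i) x0.
have := nth n.+1 (ord_cons x0 x) (ord_cons (- s) a).
rewrite big_ord_recl ord_cons0; under eq_bigr do rewrite ord_consS.
rewrite -/s addNr => /(_ erefl).
rewrite -/(qform _ _ _) qform_cons h0.
have Ecol : \sum_(j < n) - s * h x0 (x j) * a j = - s * A.
  by rewrite /A mulr_sumr; apply: eq_bigr => j _; rewrite symh; ring.
have Erow : \sum_(i < n) a i * h (x i) x0 * - s = - s * A.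
  by rewrite /A mulr_sumr; apply: eq_bigr => j _; ring.
rewrite Ecol Erow => nt.
rewrite (@eq_qform _ _ _ (fun p q => (h p x0 + h q x0) + (-1) * h p q)); last by move=> p q; ring.
rewrite qformD qformZ (qformD (fun p q => h p x0) (fun p q => h q x0)).
by rewrite (qform_row (h^~ x0)) (qform_col (h^~ x0)) -/A -/s; lra.
Qed.

(* Schoenberg: [exp(-t h(p,q)) = exp(-t h(p,x0)) exp(-t h(q,x0)) exp(t k(p,q))]
   with [k] the centered kernel above. *)
Lemma psd_expR_negative_type h t : negative_type h -> 0 <= t ->
  psd_kernel (fun p q => expR (- t * h p q)).
Proof.
move=> nth t0 [|n] x a; first by rewrite qform0.
set x0 := x ord0; pose k p q := h p x0 + h q x0 - h p q.
have symk : symmetric_kernel (fun p q => t * k p q).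
  by case: nth => _ [symh _] p q; rewrite /k (symh p q); ring.
have psdk : psd_kernel (fun p q => t * k p q).
  exact/psdZ/psd_negative_type_centered.
rewrite (@eq_qform _ _ _ (fun p q => expR (- t * h p x0) * expR (- t * h q x0) *
                                   expR (t * k p q))).
  exact/psd_diag_scale/psd_expR.
by move=> p q; rewrite -!expRD /k; congr expR; ring.
Qed.

End Schoenberg.

Local Open Scope complex_scope.

Section ComplexKernels.
Variables (R : realType) (X : Type).

Lemma normc_Re_norm (w : R[i]) : `|w| = (Re `|w|)%:C.
Proof. by rewrite normc_def. Qed.

Lemma normc_real (c : R) : `|c%:C| = `|c|%:C.
Proof. by rewrite normc_def /= expr0n addr0 sqrtr_sqr. Qed.

Lemma Re_norm_ge0 (w : R[i]) : 0 <= Re `|w|.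
Proof. by rewrite normc_def /= sqrtr_ge0. Qed.

Lemma norm_Re_le (w : R[i]) : `|Re w| <= Re `|w|.
Proof. by have := normc_ge_Re w; rewrite [X in _ <= X]normc_Re_norm lecR. Qed.

Lemma Re_le_norm (w : R[i]) M : `|w| <= M%:C -> `|Re w| <= M.
Proof. by rewrite normc_Re_norm lecR; apply: le_trans (norm_Re_le _). Qed.

Lemma Re_lt_norm (w : R[i]) M : `|w| < M%:C -> `|Re w| < M.
Proof. by rewrite normc_Re_norm ltcR; apply: le_lt_trans (norm_Re_le _). Qed.

Lemma Re_near1 (w : R[i]) e : `|w - 1| <= e%:C -> 1 - e <= Re w <= 1 + e.
Proof.
by move=> /Re_le_norm; rewrite raddfB /= ler_norml => /andP[? ?]; apply/andP; split; lra.
Qed.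

(* For a real symmetric kernel the imaginary parts of the complex quadratic
   form cancel, and the real part splits along [z = Re z + i Im z]. *)
Lemma positive_definite_psd (u : X -> X -> R) :
  psd_kernel u -> symmetric_kernel u -> positive_definite (fun p q => (u p q)%:C).
Proof.
move=> psdu symu n x z.
have term (w w' : R[i]) (c : R) : w^* * c%:C * w' =
    (c * (Re w * Re w' + Im w * Im w'))%:C + 'i * (c * (Re w * Im w' - Im w * Re w'))%:C.
  case: w => a b; case: w' => a' b'; apply/eqP; rewrite eq_complex /=.
  by apply/andP; split; apply/eqP; ring.
have Im0 : \sum_(i < n) \sum_(j < n)
    u (x i) (x j) * (Re (z i) * Im (z j) - Im (z i) * Re (z j)) = 0.
  pose F i j := u (x i) (x j) * (Re (z i) * Im (z j)).
  rewrite (eq_bigr (fun i => \sum_(j < n) (F i j - F j i))); last first.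
    by move=> i _; apply: eq_bigr => j _; rewrite /F symu; ring.
  by under eq_bigr do rewrite sumrB; rewrite sumrB exchange_big subrr.
under eq_bigr do under eq_bigr do rewrite term.
under eq_bigr do rewrite big_split /= -rmorph_sum -mulr_sumr -rmorph_sum.
rewrite big_split /= -rmorph_sum -mulr_sumr -rmorph_sum Im0 rmorph0 mulr0 addr0 ler0c.
rewrite (_ : \sum_(i < n) _ = qform u x (fun i => Re (z i)) + qform u x (fun i => Im (z i))).
  exact: addr_ge0.
by rewrite -big_split; apply: eq_bigr => i _; rewrite -big_split; apply: eq_bigr => j _ /=; ring.
Qed.

Lemma psd_Re_positive_definite (v : X -> X -> R[i]) :
  positive_definite v -> psd_kernel (fun p q => Re (v p q)).
Proof.
move=> pdv n x a; have := pdv n x (fun i => (a i)%:C); rewrite lecE => /andP[_].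
rewrite raddf_sum /=; under eq_bigr do rewrite raddf_sum /=.
have Re_term (c c' : R) (w : R[i]) : Re ((c%:C)^* * w * c'%:C) = c * Re w * c'.
  by case: w => ? ? /=; ring.
by under eq_bigr do under eq_bigr do rewrite Re_term.
Qed.

Lemma norm_scaleC_sub (c : R) (w : R[i]) : 0 <= c <= 1 ->
  `|c%:C * w - w| = ((1 - c) * Re `|w|)%:C.
Proof.
move=> /andP[c0 c1].
have -> : c%:C * w - w = (c - 1)%:C * w by rewrite rmorphB rmorph1 mulrBl mul1r.
by rewrite normrM normc_real distrC [`|1 - c|]ger0_norm ?subr_ge0 // [`|w|]normc_Re_norm -rmorphM.
Qed.

(* [v x y = <xi_x, xi_y>] in the GNS construction of [v]; this is
   [||xi_x - xi_y||^2]. *)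
Definition gns_sqdist (v : X -> X -> R[i]) x y :=
  Re (v x x) + Re (v y y) - Re (v x y) - Re (v y x).

Lemma gns_sqdist_negative_type v : positive_definite v -> negative_type (gns_sqdist v).
Proof.
move=> /psd_Re_positive_definite psdv.
split; [|split] => [x|x y|n x a a0]; rewrite /gns_sqdist; [ring|ring|].
change (qform (gns_sqdist v) x a <= 0).
rewrite (@eq_qform _ _ _ (fun p q => (Re (v p p) + Re (v q q)) +
   (-1) * (Re (v p q) + Re (v q p)))); last by move=> p q; rewrite /gns_sqdist; ring.
rewrite qformD qformZ !qformD (qform_row (fun p => Re (v p p))).
rewrite (qform_col (fun p => Re (v p p))) (qform_swap (fun p q => Re (v p q))) a0.
by have := psdv n x a; lra.
Qed.

Lemma gns_sqdist_le v M x y : (forall p q, `|v p q| <= M%:C) ->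
  gns_sqdist v x y <= 4 * M.
Proof.
move=> vM; have := Re_le_norm (vM x x); have := Re_le_norm (vM y y).
have := Re_le_norm (vM x y); have := Re_le_norm (vM y x).
by rewrite /gns_sqdist !ler_norml => /andP[? ?] /andP[? ?] /andP[? ?] /andP[? ?]; lra.
Qed.

Lemma gns_sqdist_le_near1 v e x y :
  `|v x x - 1| <= e%:C -> `|v y y - 1| <= e%:C ->
  `|v x y - 1| <= e%:C -> `|v y x - 1| <= e%:C -> gns_sqdist v x y <= 4 * e.
Proof.
move=> /Re_near1/andP[? ?] /Re_near1/andP[? ?] /Re_near1/andP[? ?] /Re_near1/andP[? ?].
by rewrite /gns_sqdist; lra.
Qed.

Lemma gns_sqdist_gt_far v e c x y :
  `|v x x - 1| <= e%:C -> `|v y y - 1| <= e%:C ->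
  `|v x y| < c%:C -> `|v y x| < c%:C -> 2 - 2 * e - 2 * c < gns_sqdist v x y.
Proof.
move=> /Re_near1/andP[? ?] /Re_near1/andP[? ?] /Re_lt_norm + /Re_lt_norm.
by rewrite /gns_sqdist !ltr_norml => /andP[? ?] /andP[? ?]; lra.
Qed.

End ComplexKernels.

Lemma sum_halfpow_le2 (R : realType) m : \sum_(i < m) 2^-1 ^+ i <= 2 :> R.
Proof.
have := @geometric_le_lim R m 1 2^-1 ler01.
rewrite /series /= big_mkord (eq_bigr _ (fun i _ => mul1r _)).
rewrite (_ : 1 / (1 - 2^-1) = 2); last by field.
apply; first by rewrite invr_gt0.
by rewrite ger0_norm ?invr_ge0 // invf_lt1 // ltr1n.
Qed.

Section MetricKernels.
Variables (R : realType) (X : Type) (d : X -> X -> R).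

Lemma metrically_proper_nonneg (h : X -> X -> R) : (forall x y, 0 <= h x y) ->
  metrically_proper d (fun x y => (h x y)%:C) <->
  (forall r, 0 < r -> exists M, forall x y, d x y <= r -> h x y <= M) /\
  (forall c, 0 < c -> exists r, 0 < r /\ forall x y, r < d x y -> c < h x y).
Proof.
move=> h0; have normh x y : `|(h x y)%:C| = (h x y)%:C by rewrite normc_real ger0_norm.
split=> -[bd pr]; split=> [r /bd[M HM]|c /pr[r [r0 Hr]]];
  by [exists M => x y /HM; rewrite normh lecR | exists r; split=> // x y /Hr; rewrite normh ltcR].
Qed.

Lemma C0_diag_nonneg (u : X -> X -> R) : (forall x y, 0 <= u x y) ->
  (exists M, forall x y, u x y <= M) ->
  (forall eps, 0 < eps -> exists r, 0 < r /\ forall x y, r < d x y -> u x y < eps) ->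
  C0_diag d (fun x y => (u x y)%:C).
Proof.
move=> u0 [M uM] udec; have normu x y : `|(u x y)%:C| = (u x y)%:C.
  by rewrite normc_real ger0_norm.
split; first by exists M => x y; rewrite normu lecR.
by move=> eps /udec[r [r0 ur]]; exists r; split=> // x y /ur; rewrite normu ltcR.
Qed.

Lemma expR_neg_lt_inv (s : R) : 0 < s -> expR (- s) < s^-1.
Proof.
move=> s0; rewrite expRN ltf_pV2 ?posrE ?expR_gt0 //.
by have := expR_ge1Dx s; lra.
Qed.

Section HeatKernel.
Variable h : X -> X -> R.
Hypothesis h0 : forall x y, 0 <= h x y.
Hypothesis h_bounded : forall r, 0 < r -> exists M, forall x y, d x y <= r -> h x y <= M.
Hypothesis h_proper :
  forall c, 0 < c -> exists r, 0 < r /\ forall x y, r < d x y -> c < h x y.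

Lemma heat_kernel_bounds t x y : 0 <= t ->
  0 <= 1 - expR (- t * h x y) <= 1 /\ 1 - expR (- t * h x y) <= t * h x y.
Proof.
move=> t0; have := expR_gt0 (- t * h x y); have := expR_ge1Dx (- t * h x y).
have : expR (- t * h x y) <= 1 by rewrite expR_le1 mulNr oppr_le0 mulr_ge0.
by move=> *; split; [apply/andP; split|]; lra.
Qed.

Lemma heat_kernel_C0 t : 0 < t -> C0_diag d (fun x y => (expR (- t * h x y))%:C).
Proof.
move=> t0; apply: C0_diag_nonneg => [x y||]; first exact/ltW/expR_gt0.
  by exists 1 => x y; have [/andP[? _] _] := heat_kernel_bounds x y (ltW t0); lra.
move=> eps eps0; have te0 : 0 < (t * eps)^-1 by rewrite invr_gt0 mulr_gt0.
have [r [r0 hr]] := h_proper te0; exists r; split=> // x y /hr th.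
have th0 : 0 < t * h x y by rewrite mulr_gt0 // (lt_trans te0).
rewrite mulNr; apply: lt_trans (expR_neg_lt_inv th0) _.
rewrite -[eps]invrK ltf_pV2 ?posrE ?invr_gt0 //.
by rewrite -ltr_pdivrMl // -invfM.
Qed.

(* On the tube [d <= r] outside which [f] is [eps]-small, [1 - exp(-t h)] is
   at most [t] times the bound of [h] on that tube. *)
Lemma heat_kernel_approx (f : X -> X -> R[i]) eps : C0_diag d f -> 0 < eps ->
  exists t0, 0 < t0 /\ forall t, 0 <= t <= t0 -> forall x y,
    `|(expR (- t * h x y))%:C * f x y - f x y| <= eps%:C.
Proof.
move=> [[M fM] fdec] eps0; have [r [r0 fr]] := fdec eps eps0.
have [Mh hM] := h_bounded r0.
set B := `|M| + 1; set C := `|Mh| + 1.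
have B0 : 0 < B by rewrite ltr_wpDl.
have C0 : 0 < C by rewrite ltr_wpDl.
exists (eps / (C * B)); split=> [|t /andP[t0 tle] x y]; first by rewrite divr_gt0 ?mulr_gt0.
have [/andP[e0 e1] eth] := heat_kernel_bounds x y t0.
rewrite norm_scaleC_sub; last by apply/andP; split; lra.
rewrite lecR; have f0 := Re_norm_ge0 (f x y).
have fB : Re `|f x y| <= B.
  move: (fM x y); rewrite normc_Re_norm lecR => /le_trans; apply.
  by rewrite /B; have := ler_norm M; lra.
have [dxy|dxy] := leP (d x y) r; last first.
  by have := fr x y dxy; rewrite normc_Re_norm ltcR; nra.
have hC : h x y <= C by have := hM x y dxy; have := ler_norm Mh; rewrite /C; lra.
have tC : t * h x y <= eps / B.
  apply: le_trans (ler_wpM2l t0 hC) _; rewrite -ler_pdivlMr //.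
  by rewrite mulrAC -mulrA -invfM.
apply: le_trans (ler_pM e0 f0 (le_trans eth tC) fB) _.
by rewrite divfK ?gt_eqF.
Qed.

End HeatKernel.

Section KernelSeries.
Variables (g : nat -> X -> X -> R) (B r : nat -> R).
Hypothesis g_negative_type : forall n, negative_type (g n).
Hypothesis g_small : forall n x y, d x y <= n.+1%:R -> g n x y <= 2^-1 ^+ n.
Hypothesis g_bounded : forall n x y, g n x y <= B n.
Hypothesis g_far : forall n x y, r n < d x y -> 1 <= g n x y.
Hypothesis r_ge0 : forall n, 0 <= r n.

Definition kernel_sum x y := sup (range (fun N => \sum_(n < N) g n x y)).

Lemma g_ge0 n x y : 0 <= g n x y.
Proof. exact: negative_type_ge0. Qed.

Lemma partial_sum_nondecreasing x y :
  {homo (fun N => \sum_(n < N) g n x y) : N N' / (N <= N')%N >-> N <= N'}.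
Proof.
move=> N N' NN'; rewrite -(subnKC NN') big_split_ord /= lerDl.
by apply: sumr_ge0 => n _; apply: g_ge0.
Qed.

(* From index [K] on, the tube [d <= K] is in the small regime of [g]. *)
Lemma partial_sum_le_tube K x y N : d x y <= K%:R ->
  \sum_(n < N) g n x y <= \sum_(n < K) B n + 2.
Proof.
move=> dK; apply: le_trans (partial_sum_nondecreasing x y (leq_maxl N K)) _.
rewrite -(subnKC (leq_maxr N K)) big_split_ord /=.
apply: lerD; first by apply: ler_sum => n _; apply: g_bounded.
apply: le_trans (sum_halfpow_le2 R (maxn N K - K)); apply: ler_sum => i _.
apply: le_trans (g_small _) _.
  by apply: le_trans dK _; rewrite ler_nat -addnS leq_addr.
by rewrite exprD ler_piMl ?exprn_ge0 ?invr_ge0 // exprn_ile1 ?invr_ge0 ?invf_le1 ?ler1n.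
Qed.

Lemma partial_sum_bounded x y : has_ubound (range (fun N => \sum_(n < N) g n x y)).
Proof.
exists (\sum_(n < Num.Def.archi_bound `|d x y|) B n + 2) => _ [N _ <-].
by apply/partial_sum_le_tube/ltW/(le_lt_trans (ler_norm _))/archi_boundP.
Qed.

Lemma partial_sum_cvg x y :
  (fun N => \sum_(n < N) g n x y) @ \oo --> kernel_sum x y.
Proof. exact/nondecreasing_cvgn/partial_sum_bounded/partial_sum_nondecreasing. Qed.

Lemma kernel_sum_negative_type : negative_type kernel_sum.
Proof.
apply: negative_type_cvg (fun N x y => \sum_(n < N) g n x y) partial_sum_cvg _.
by move=> N; apply: negative_type_sum.
Qed.

Lemma partial_sum_le_kernel_sum N x y : \sum_(n < N) g n x y <= kernel_sum x y.
Proof.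
apply: sup_upper_bound; last by exists N.
by split; [exists (\sum_(n < 0) g n x y), 0%N | exact: partial_sum_bounded].
Qed.

Lemma kernel_sum_ge0 x y : 0 <= kernel_sum x y.
Proof. by apply: le_trans (partial_sum_le_kernel_sum 0 x y); rewrite big_ord0. Qed.

Lemma kernel_sum_metrically_proper :
  metrically_proper d (fun x y => (kernel_sum x y)%:C).
Proof.
apply/(metrically_proper_nonneg kernel_sum_ge0); split=> [s s0|c c0].
  exists (\sum_(n < Num.Def.archi_bound s) B n + 2) => x y dxy.
  apply: ge_sup; first by exists (\sum_(n < 0) g n x y), 0%N.
  move=> _ [N _ <-]; apply: partial_sum_le_tube.
  exact/(le_trans dxy)/ltW/archi_boundP/ltW.
set N := Num.Def.archi_bound c.
exists (1 + \sum_(n < N) r n); split=> [|x y dxy].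
  by rewrite ltr_wpDr // sumr_ge0.
apply: lt_le_trans (partial_sum_le_kernel_sum N x y).
apply: lt_le_trans (archi_boundP (ltW c0)) _.
rewrite -[N in N%:R]card_ord -sumr_const; apply: ler_sum => n _; apply: g_far.
apply: le_lt_trans dxy; rewrite (bigD1 n) //= addrCA lerDl addr_ge0 //.
by rewrite sumr_ge0.
Qed.

End KernelSeries.

End MetricKernels.

Lemma directed_leq : directed (fun m n : nat => (m <= n)%N).
Proof.
split; first exact: inhabits 0%N.
split; first exact: leqnn.
split; first by move=> i j k; apply: leq_trans.
by move=> i j; exists (maxn i j); rewrite leq_maxl leq_maxr.
Qed.

Lemma pd_approx_unit_of_negative_type (R : realType) (X : Type) (d h : X -> X -> R) :
  negative_type h -> metrically_proper d (fun x y => (h x y)%:C) ->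
  has_pd_approx_unit d.
Proof.
move=> nth /(metrically_proper_nonneg _ (negative_type_ge0 nth)) [hbd hpr].
pose t n : R := n.+1%:R^-1.
have t0 n : 0 < t n by rewrite invr_gt0.
exists nat, (fun m n => (m <= n)%N), (fun n x y => (expR (- t n * h x y))%:C).
split; first exact: directed_leq.
split=> [n|f f0 eps eps0].
  split; first by apply: (heat_kernel_C0 (negative_type_ge0 nth) hpr); apply: t0.
  apply: positive_definite_psd; first by apply: psd_expR_negative_type => //; exact: ltW.
  by move=> p q; case: nth => _ [-> _].
have [t1 [t10 approx]] := heat_kernel_approx (negative_type_ge0 nth) hbd f0 eps0.
have [N tN] : exists N, t N <= t1.
  exists (Num.Def.archi_bound t1^-1); rewrite invf_ple ?posrE //.
  by apply/ltW/(lt_le_trans (archi_boundP _)); rewrite ?ler_nat // invr_ge0 ltW.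
exists N => n Nn x y; apply: approx; rewrite ltW //=.
by apply: le_trans tN; rewrite lef_pV2 ?posrE // ler_nat.
Qed.

Lemma pd_approx_unit_seq (R : realType) (X : Type) (d : X -> X -> R) :
  has_pd_approx_unit d ->
  exists v : nat -> X -> X -> R[i],
    (forall n, C0_diag d (v n) /\ positive_definite (v n)) /\
    (forall n x y, d x y <= n.+1%:R -> `|v n x y - 1| <= (2^-1 ^+ n.+2)%:C).
Proof.
move=> [I [le [u [[_ [le_refl _]] [u_C0pd u_approx]]]]].
have near1 n : exists i, forall x y, d x y <= n.+1%:R ->
    `|u i x y - 1| <= (2^-1 ^+ n.+2)%:C.
  pose tube x y : R := if d x y <= n.+1%:R then 1 else 0.
  have tube_C0 : C0_diag d (fun x y => (tube x y)%:C).
    apply: C0_diag_nonneg => [x y||]; first by rewrite /tube; case: ifP.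
      by exists 1 => x y; rewrite /tube; case: ifP.
    move=> eps eps0; exists n.+1%:R; split=> // x y.
    by rewrite /tube ltNge => /negbTE ->.
  have half_pow_gt0 : 0 < 2^-1 ^+ n.+2 :> R by rewrite exprn_gt0 // invr_gt0.
  have [i approx] := u_approx _ tube_C0 _ half_pow_gt0.
  by exists i => x y dxy; have := approx i (le_refl i) x y; rewrite /tube dxy mulr1.
have [sel Hsel] := choice near1.
by exists (fun n => u (sel n)); split=> [n|]; [apply: u_C0pd | apply: Hsel].
Qed.

Lemma negative_type_of_pd_approx_unit (R : realType) (X : Type) (d : X -> X -> R) :
  is_metric d -> has_pd_approx_unit d ->
  exists h : X -> X -> R,
    negative_type h /\ metrically_proper d (fun x y => (h x y)%:C).
Proof.
move=> [_ [d0 [dsym _]]] /pd_approx_unit_seq[v [v_C0pd v_near1]].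
have [M vM] := choice (fun n => (v_C0pd n).1.1).
have quarter_gt0 : 0 < 4^-1 :> R by rewrite invr_gt0.
have [r vr] := choice (fun n => (v_C0pd n).1.2 _ quarter_gt0).
have v_diag n x : `|v n x x - 1| <= (2^-1 ^+ n.+2)%:C.
  by apply: v_near1; rewrite (d0 x x).2.
have e4 n : 4 * 2^-1 ^+ n.+2 = 2^-1 ^+ n :> R by rewrite !exprS; field.
have e_le n : 2^-1 ^+ n.+2 <= 4^-1 :> R.
  rewrite -(ler_pM2l (ltr0n _ 4)) e4 mulfV ?pnatr_eq0 //.
  by rewrite exprn_ile1 ?invr_ge0 ?invf_le1 ?ler1n.
have g_nt n : negative_type (gns_sqdist (v n)).
  exact: gns_sqdist_negative_type (v_C0pd n).2.
have g_small n x y : d x y <= n.+1%:R -> gns_sqdist (v n) x y <= 2^-1 ^+ n.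
  move=> dxy; rewrite -e4; apply: gns_sqdist_le_near1; try exact: v_diag.
    exact: v_near1.
  by apply: v_near1; rewrite dsym.
have g_bounded n x y : gns_sqdist (v n) x y <= 4 * M n.
  exact: gns_sqdist_le (vM n).
have g_far n x y : r n < d x y -> 1 <= gns_sqdist (v n) x y.
  move=> dxy; have dyx : r n < d y x by rewrite dsym.
  have := gns_sqdist_gt_far (v_diag n x) (v_diag n y) ((vr n).2 x y dxy) ((vr n).2 y x dyx).
  by have := e_le n; lra.
exists (kernel_sum (fun n => gns_sqdist (v n))); split.
  exact: kernel_sum_negative_type g_nt g_small g_bounded.
exact: kernel_sum_metrically_proper g_nt g_small g_bounded g_far (fun n => ltW (vr n).1).
Qed.

Unset Implicit Arguments.

Theorem theorem2p1 (R : realType) (X : Type) (d : X -> X -> R) (hd : is_metric d) :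
  has_pd_approx_unit d <->
  exists h : X -> X -> R,
    negative_type h /\ metrically_proper d (fun x y => (h x y)%:C%C).
Proof.
split; first exact: negative_type_of_pd_approx_unit.
by move=> [h [nth proper]]; exact: pd_approx_unit_of_negative_type nth proper.
Qed.
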